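(* Let $0<a<D$. For every $\omega\in\Omega$ and every nonnegative global solution $(s(t),m_1(t),m_2(t))$, $t\ge0$, of the random chemostat system $$s'(t)=(D+\psi(\xi^*(\theta_t\omega)))(s_{\mathrm{in}}-\alpha s(t))-c\mu(s(t))(m_1(t)+m_2(t))+rd\,m_1(t),$$ $$m_1'(t)=m_1(t)\big(-d-\alpha(D+\psi(\xi^*(\theta_t\omega)))+g\mu(s(t))-r_1m_1(t)-r_2m_2(t)-\alpha_1\big)+\alpha_2m_2(t),$$ $$m_2'(t)=m_2(t)\big(-d+g\mu(s(t))-r_1m_1(t)-r_2m_2(t)-\alpha_2\big)+\alpha_1m_1(t),$$ there exist $T>0$ and $s^*>0$ such that $s(t)\ge s^*$ for all $t\ge T$.
   Context: Let $\Omega$ be the set of continuous functions $\omega:\mathbb{R}\to\mathbb{R}$ with $\omega(0)=0$, with Borel $\sigma$-algebra and Wiener measure, and $\theta_t\omega(\cdot)=\omega(\cdot+t)-\omega(t)$ the Wiener shift. The Ornstein–Uhlenbeck process is $\xi^*(\theta_t\omega)=-\int_{-\infty}^0 e^{s}\,\theta_t\omega(s)\,ds$. For a constant $a>0$, $\psi(\xi)=\frac{2a}{\pi}\arctan(\xi)$. Parameters: $D>0$, $s_{\mathrm{in}}>0$, $\alpha>0$, $c>0$, $g\in(0,c]$, $r\in(0,1)$, $d>0$, $\alpha_1,\alpha_2\ge0$, $r_1,r_2\ge0$. The consumption function $\mu:[0,+\infty)\to[0,+\infty)$ is continuous, $\mu(0)=0$, $\mu(x)>0$ for $x>0$, and $\mu(x)\le1$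 for all $x\ge0$. *)

From Stdlib Require Import Reals.
From Coquelicot Require Import Coquelicot.
Open Scope R_scope.

(* Omega: continuous paths omega : R -> R with omega 0 = 0
   (the Wiener measure plays no role: the statement is for every omega). *)
Definition in_Omega (w : R -> R) : Prop :=
  (forall x, continuity_pt w x) /\ w 0 = 0.

Definition theta (t : R) (w : R -> R) : R -> R := fun s => w (s + t) - w t.

(* Stationary Ornstein-Uhlenbeck process:
   xi*(w) = - int_{-oo}^0 e^s w(s) ds  (improper Riemann integral). *)
Definition xi_star (w : R -> R) : R :=
  - RInt_gen (fun s => exp s * w s) (Rbar_locally m_infty) (at_point 0).

Definition psi (a xi : R) : R := 2 * a / PI * atan xi.

(* Since |psi| < a < D, the random dilution rate D + psi(xi*(theta_t w)) stays in
   [D - a, D + a], a compact subinterval of (0, oo); nothing else about the noise matters.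
   For the weighted total mass V = g s + c (m1 + m2) the uptake and mutation terms cancel,
   and g <= c makes recycling dominated by death, so V' <= g (D + a) s_in - lambda V and V
   is eventually bounded by some K.  Then, when s is small, mu(s) is small, the uptake
   c mu(s) (m1 + m2) <= mu(s) K is at most a quarter of the inflow (D - a) s_in, so s
   increases at a uniform rate below a threshold s*; a function pushed up at a uniform
   rate whenever it lies below a level eventually stays above that level. *)

From Stdlib Require Import Reals Lra Psatz Classical.
From Coquelicot Require Import Coquelicot.
Open Scope R_scope.

Lemma is_derive_continuity_pt (f : R -> R) (x l : R) :
  is_derive f x l -> continuity_pt f x.
Proof.
  intro Hd. apply derivable_continuous_pt. exists l. now apply is_derive_Reals.
Qed.

Lemma is_derive_pos_left_lt (f : R -> R) (x l b : R) :
  is_derive f x l -> 0 < l -> b < x -> exists y, b <= y < x /\ f y < f x.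
Proof.
  intros Hd Hl Hb. apply is_derive_Reals in Hd.
  destruct (Hd (l / 2) ltac:(lra)) as [[del Hdel0] Hdel].
  set (h := - Rmin (del / 2) (x - b)).
  assert (Hmin_l := Rmin_l (del / 2) (x - b)).
  assert (Hmin_r := Rmin_r (del / 2) (x - b)).
  assert (Hmin_pos : 0 < Rmin (del / 2) (x - b)) by (apply Rmin_pos; lra).
  assert (Hh : h < 0) by (unfold h; lra).
  assert (Habs : Rabs h < del) by (unfold h; rewrite Rabs_Ropp, Rabs_pos_eq; lra).
  specialize (Hdel h ltac:(lra) Habs). apply Rabs_def2 in Hdel.
  exists (x + h). split; [unfold h; lra|].
  assert (Hq : (f (x + h) - f x) / h * h = f (x + h) - f x) by (field; lra).
  nra.
Qed.

Lemma filterlim_within_ge0_lt (f : R -> R) (eps : R) :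
  filterlim f (within (fun y => 0 <= y) (locally 0)) (locally 0) -> 0 < eps ->
  exists delta, 0 < delta /\ forall x, 0 <= x < delta -> f x < eps.
Proof.
  intros Hf Heps.
  destruct (proj1 (filterlim_locally f 0) Hf (mkposreal eps Heps)) as [[delta Hdelta] Hnear].
  exists delta. split; [exact Hdelta|]. intros x Hx.
  assert (Hball : ball 0 delta x).
  { change (Rabs (x - 0) < delta). rewrite Rminus_0_r, Rabs_pos_eq; lra. }
  specialize (Hnear x Hball (proj1 Hx)).
  change (Rabs (f x - 0) < eps) in Hnear. apply Rabs_def2 in Hnear. lra.
Qed.

Section Barrier.

Variables (f f' : R -> R) (t0 L eps : R).
Hypothesis eps_gt0 : 0 < eps.
Hypothesis f_deriv : forall t, t0 < t -> is_derive f t (f' t).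
Hypothesis f'_ge_below : forall t, t0 < t -> f t <= L -> eps <= f' t.

Lemma barrier_reached : exists t1, t0 < t1 /\ L <= f t1.
Proof.
  apply NNPP; intro Hnever.
  assert (Hbelow : forall t, t0 < t -> f t < L).
  { intros t Ht. apply Rnot_le_lt. intro HL. apply Hnever. now exists t. }
  set (t1 := t0 + 1).
  assert (Ht1 : t0 < t1) by (unfold t1; lra).
  assert (Hq : 0 < (L - f t1) / eps).
  { apply Rdiv_lt_0_compat; [|lra]. assert (f t1 < L) by (apply Hbelow; lra). lra. }
  set (t := t1 + (L - f t1) / eps + 1).
  assert (Ht : t1 < t) by (unfold t; lra).
  assert (Hdom : forall x, Rmin t1 t <= x <= Rmax t1 t -> t0 < x).
  { intros x. rewrite Rmin_left, Rmax_right by lra. lra. }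
  destruct (MVT_gen f t1 t f') as [x [Hx Hmvt]].
  - intros x Hx. apply f_deriv, Hdom. lra.
  - intros x Hx. apply (is_derive_continuity_pt _ _ (f' x)), f_deriv, Hdom, Hx.
  - assert (Hslope : eps <= f' x) by (apply f'_ge_below; [|apply Rlt_le, Hbelow]; apply Hdom, Hx).
    assert (f t < L) by (apply Hbelow; lra).
    assert (Hgap : eps * ((L - f t1) / eps) = L - f t1) by (field; lra).
    assert (Hlen : t - t1 = (L - f t1) / eps + 1) by (unfold t; ring).
    rewrite Hlen in Hmvt. nra.
Qed.

Lemma barrier_invariant (t1 t : R) : t0 < t1 -> L <= f t1 -> t1 <= t -> L <= f t.
Proof.
  intros Ht1 HL Ht. apply Rnot_lt_le. intro Hft.
  assert (Hcont : forall x, t1 <= x <= t -> continuity_pt f x).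
  { intros x Hx. apply (is_derive_continuity_pt _ _ (f' x)), f_deriv. lra. }
  (* At a minimum u of f on [t1, t] we would have f u < L, hence f' u > 0 and
     f smaller just to the left of u. *)
  destruct (continuity_ab_min f t1 t Ht Hcont) as [u [Hmin Hu]].
  assert (Hfu : f u < L) by (specialize (Hmin t); lra).
  assert (Hu1 : t1 < u) by (destruct (Rle_lt_or_eq_dec t1 u (proj1 Hu)) as [|<-]; lra).
  destruct (is_derive_pos_left_lt f u (f' u) t1) as [y [Hy Hfy]]; [apply f_deriv; lra| |lra|].
  - assert (eps <= f' u) by (apply f'_ge_below; lra). lra.
  - specialize (Hmin y ltac:(lra)). lra.
Qed.

Lemma barrier_eventually_ge : exists T, t0 < T /\ forall t, T <= t -> L <= f t.
Proof.
  destruct barrier_reached as [t1 [Ht1 HL]].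
  exists t1. split; [exact Ht1|]. intros t Ht. exact (barrier_invariant t1 t Ht1 HL Ht).
Qed.

End Barrier.

Lemma psi_bounds (a xi : R) : 0 < a -> - a < psi a xi < a.
Proof.
  intro Ha. unfold psi.
  destruct (atan_bound xi) as [Hlo Hhi].
  assert (HPI := PI_RGT_0).
  set (u := atan xi) in *.
  assert (E : 2 * a / PI * u = a * (u / (PI / 2))) by (field; lra).
  rewrite E.
  assert (u / (PI / 2) < 1) by (apply (Rmult_lt_reg_r (PI / 2)); [lra|]; field_simplify; lra).
  assert (-1 < u / (PI / 2)) by (apply (Rmult_lt_reg_r (PI / 2)); [lra|]; field_simplify; lra).
  split; nra.
Qed.

Section Chemostat.

Variables (dmin dmax s_in alpha c g r d alpha1 alpha2 r1 r2 : R).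
Variables (mu dil s m1 m2 : R -> R).

Definition substrate_rate (t : R) : R :=
  dil t * (s_in - alpha * s t) - c * mu (s t) * (m1 t + m2 t) + r * d * m1 t.

Definition m1_rate (t : R) : R :=
  m1 t * (- d - alpha * dil t + g * mu (s t) - r1 * m1 t - r2 * m2 t - alpha1)
  + alpha2 * m2 t.

Definition m2_rate (t : R) : R :=
  m2 t * (- d + g * mu (s t) - r1 * m1 t - r2 * m2 t - alpha2) + alpha1 * m1 t.

Lemma total_mass_rate_eq (t : R) :
  g * substrate_rate t + c * (m1_rate t + m2_rate t)
  = g * dil t * (s_in - alpha * s t) + g * r * d * m1 t - c * d * (m1 t + m2 t)
    - c * alpha * dil t * m1 t - c * (r1 * m1 t + r2 * m2 t) * (m1 t + m2 t).
Proof. unfold substrate_rate, m1_rate, m2_rate. ring. Qed.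

Hypothesis dmin_gt0 : 0 < dmin.
Hypothesis dil_bounds : forall t, dmin <= dil t <= dmax.
Hypothesis s_in_gt0 : 0 < s_in.
Hypothesis alpha_gt0 : 0 < alpha.
Hypothesis c_gt0 : 0 < c.
Hypothesis g_gt0 : 0 < g.
Hypothesis g_le_c : g <= c.
Hypothesis r_gt0 : 0 < r.
Hypothesis r_lt1 : r < 1.
Hypothesis d_gt0 : 0 < d.
Hypothesis r1_ge0 : 0 <= r1.
Hypothesis r2_ge0 : 0 <= r2.
Hypothesis solution_ge0 : forall t, 0 <= t -> 0 <= s t /\ 0 <= m1 t /\ 0 <= m2 t.
Hypothesis s_deriv : forall t, 0 < t -> is_derive s t (substrate_rate t).
Hypothesis m1_deriv : forall t, 0 < t -> is_derive m1 t (m1_rate t).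
Hypothesis m2_deriv : forall t, 0 < t -> is_derive m2 t (m2_rate t).

Definition mass_decay : R := Rmin (alpha * dmin) (d * (1 - r)).

Lemma mass_decay_gt0 : 0 < mass_decay.
Proof. apply Rmin_pos; nra. Qed.

Lemma total_mass_rate_le (t : R) : 0 <= t ->
  g * substrate_rate t + c * (m1_rate t + m2_rate t)
  <= g * dmax * s_in - mass_decay * (g * s t + c * (m1 t + m2 t)).
Proof.
  intro Ht. rewrite total_mass_rate_eq.
  destruct (solution_ge0 t Ht) as [Hs [H1 H2]].
  destruct (dil_bounds t) as [Hlo Hhi].
  assert (Hl1 : mass_decay <= alpha * dmin) by apply Rmin_l.
  assert (Hl2 : mass_decay <= d * (1 - r)) by apply Rmin_r.
  assert (Hin : g * dil t * s_in <= g * dmax * s_in) by (apply Rmult_le_compat_r; nra).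
  assert (Hwash : mass_decay * (g * s t) <= g * alpha * dil t * s t).
  { assert (Hrate : mass_decay <= alpha * dil t) by nra.
    assert (0 <= g * s t) by (apply Rmult_le_pos; lra).
    apply (Rmult_le_compat_r (g * s t)) in Hrate; [lra|assumption]. }
  assert (Hdeath1 : mass_decay * (c * m1 t) <= c * d * m1 t - g * r * d * m1 t).
  { assert (g * r * d <= c * r * d) by (apply Rmult_le_compat_r; nra).
    assert (0 <= c * m1 t) by (apply Rmult_le_pos; lra). nra. }
  assert (Hdeath2 : mass_decay * (c * m2 t) <= c * d * m2 t).
  { assert (mass_decay <= d) by nra.
    assert (0 <= c * m2 t) by (apply Rmult_le_pos; lra). nra. }
  assert (0 <= c * alpha * dil t * m1 t) by (repeat apply Rmult_le_pos; lra).
  assert (0 <= c * (r1 * m1 t + r2 * m2 t) * (m1 t + m2 t)) by (repeat apply Rmult_le_pos; nra).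
  nra.
Qed.

Lemma biomass_eventually_bounded :
  exists T K, 0 < T /\ 0 < K /\ forall t, T <= t -> c * (m1 t + m2 t) <= K.
Proof.
  set (A := g * dmax * s_in).
  assert (Hdmax : 0 < dmax) by (specialize (dil_bounds 0); lra).
  assert (HA : 0 < A) by (unfold A; repeat apply Rmult_lt_0_compat; lra).
  assert (Hl := mass_decay_gt0).
  set (K := 2 * A / mass_decay).
  assert (HK : mass_decay * K = 2 * A) by (unfold K; field; lra).
  destruct (barrier_eventually_ge (fun t => - (g * s t + c * (m1 t + m2 t)))
              (fun t => - (g * substrate_rate t + c * (m1_rate t + m2_rate t))) 0 (- K) A HA)
    as [T [HT Hmass]].
  - intros t Ht.
    exact (is_derive_opp _ _ _ (is_derive_plus _ _ _ _ _ (is_derive_scal _ _ g _ (s_deriv t Ht))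
             (is_derive_scal _ _ c _ (is_derive_plus _ _ _ _ _ (m1_deriv t Ht) (m2_deriv t Ht))))).
  - intros t Ht Hbig.
    assert (Hrate := total_mass_rate_le t ltac:(lra)).
    fold A in Hrate. nra.
  - exists T, K. split; [exact HT|]. split; [unfold K; apply Rdiv_lt_0_compat; lra|]. intros t Ht.
    specialize (Hmass t Ht). destruct (solution_ge0 t ltac:(lra)) as [Hs _]. nra.
Qed.

Hypothesis mu_cont0 : filterlim mu (within (fun y => 0 <= y) (locally 0)) (locally 0).
Hypothesis mu_ge0 : forall x, 0 <= x -> 0 <= mu x.

Lemma substrate_persistent :
  exists T s_star, 0 < T /\ 0 < s_star /\ forall t, T <= t -> s_star <= s t.
Proof.
  destruct biomass_eventually_bounded as [T1 [K [HT1 [HK Hbio]]]].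
  set (eta := dmin * s_in / (4 * K)).
  assert (Heta : 0 < eta) by (unfold eta; apply Rdiv_lt_0_compat; nra).
  assert (HetaK : eta * K = dmin * s_in / 4) by (unfold eta; field; lra).
  destruct (filterlim_within_ge0_lt mu eta mu_cont0 Heta) as [delta [Hdelta Hsmall]].
  set (s_star := Rmin (delta / 2) (s_in / (2 * alpha))).
  assert (Hstar1 : s_star <= delta / 2) by apply Rmin_l.
  assert (Hstar2 : alpha * s_star <= s_in / 2).
  { assert (s_star <= s_in / (2 * alpha)) by apply Rmin_r.
    replace (s_in / 2) with (alpha * (s_in / (2 * alpha))) by (field; lra). nra. }
  assert (Hstar0 : 0 < s_star).
  { apply Rmin_pos; [lra|apply Rdiv_lt_0_compat; lra]. }
  destruct (barrier_eventually_ge s substrate_rate T1 s_star (dmin * s_in / 4) ltac:(nra))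
    as [T [HT Hs]].
  - intros t Ht. apply s_deriv. lra.
  - intros t Ht Hst.
    destruct (solution_ge0 t ltac:(lra)) as [H0 [H1 H2]].
    destruct (dil_bounds t) as [Hlo _].
    assert (Hmu : mu (s t) < eta) by (apply Hsmall; lra).
    assert (Hmu0 := mu_ge0 (s t) H0).
    specialize (Hbio t ltac:(lra)).
    assert (Hinflow : dmin * (s_in / 2) <= dil t * (s_in - alpha * s t)).
    { apply Rmult_le_compat; nra. }
    assert (Huptake : c * mu (s t) * (m1 t + m2 t) <= eta * K).
    { replace (c * mu (s t) * (m1 t + m2 t)) with (mu (s t) * (c * (m1 t + m2 t))) by ring.
      apply Rmult_le_compat; nra. }
    assert (0 <= r * d * m1 t) by (repeat apply Rmult_le_pos; lra).
    unfold substrate_rate. lra.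
  - exists T, s_star. repeat split; try lra. exact Hs.
Qed.

End Chemostat.
Theorem proposition4p1
  (a D s_in alpha c g r d alpha1 alpha2 r1 r2 : R) (mu : R -> R)
  (Ha : 0 < a) (HaD : a < D) (HD : 0 < D) (Hsin : 0 < s_in)
  (Halpha : 0 < alpha) (Hc : 0 < c) (Hg : 0 < g) (Hgc : g <= c)
  (Hr0 : 0 < r) (Hr1 : r < 1) (Hd : 0 < d)
  (Ha1 : 0 <= alpha1) (Ha2 : 0 <= alpha2) (Hr1' : 0 <= r1) (Hr2' : 0 <= r2)
  (Hmu_cont : forall x, 0 <= x ->
     filterlim mu (within (fun y => 0 <= y) (locally x)) (locally (mu x)))
  (Hmu0 : mu 0 = 0)
  (Hmu_pos : forall x, 0 < x -> 0 < mu x)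
  (Hmu_nonneg : forall x, 0 <= x -> 0 <= mu x)
  (Hmu_le1 : forall x, 0 <= x -> mu x <= 1) :
  forall (w : R -> R), in_Omega w ->
  forall (s m1 m2 : R -> R),
    (forall t, 0 <= t -> 0 <= s t /\ 0 <= m1 t /\ 0 <= m2 t) ->
    (forall t, 0 < t ->
       is_derive s t
         ((D + psi a (xi_star (theta t w))) * (s_in - alpha * s t)
          - c * mu (s t) * (m1 t + m2 t) + r * d * m1 t)) ->
    (forall t, 0 < t ->
       is_derive m1 t
         (m1 t * (- d - alpha * (D + psi a (xi_star (theta t w))) + g * mu (s t)
                  - r1 * m1 t - r2 * m2 t - alpha1) + alpha2 * m2 t)) ->
    (forall t, 0 < t ->
       is_derive m2 t
         (m2 t * (- d + g * mu (s t) - r1 * m1 t - r2 * m2 t - alpha2)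
          + alpha1 * m1 t)) ->
    exists T s_star, 0 < T /\ 0 < s_star /\ forall t, T <= t -> s_star <= s t.
Proof.
  intros w _ s m1 m2 Hnn Hs Hm1 Hm2.
  assert (Hdil : forall t, D - a <= D + psi a (xi_star (theta t w)) <= D + a).
  { intro t. destruct (psi_bounds a (xi_star (theta t w)) Ha). lra. }
  assert (Hmu_cont0 : filterlim mu (within (fun y => 0 <= y) (locally 0)) (locally 0)).
  { rewrite <- Hmu0 at 2. exact (Hmu_cont 0 (Rle_refl 0)). }
  exact (substrate_persistent (D - a) (D + a) s_in alpha c g r d alpha1 alpha2 r1 r2
           mu (fun t => D + psi a (xi_star (theta t w))) s m1 m2
           ltac:(lra) Hdil Hsin Halpha Hc Hg Hgc Hr0 Hr1 Hd Hr1' Hr2' Hnn Hs Hm1 Hm2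
           Hmu_cont0 Hmu_nonneg).
Qed.
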